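(* Let $I_3:=\bigcup_{i=0}^{3}L_i^{(9-i)}$ and $r:=\dot E/E+\tfrac{4}{3z}$, evaluated along solutions of the Boutroux–Painlevé system. For every $\epsilon>0$ there exists a neighbourhood $U$ of $I_3$ in $\mathcal S$ such that $|r|<\epsilon$ in $U$, for all $z\in\mathbb C\setminus\{0\}$. For every compact subset $K$ of $(L_4^{(5)}\setminus L_5^{(4)})\cup(L_7^{(2)}\setminus L_8^{(1)})$ there exist a neighbourhood $V$ of $K$ in $S_9$ and a constant $C>0$ such that $|3z\dot E/(4E)|\le C$ in $V$ for all $z\in\mathbb C\setminus\{0\}$.
   Context: Fix $\alpha\in\mathbb C$. Boutroux–Painlevé system: $\dot u=v-u^2-\tfrac12-\tfrac{u}{3z}$, $\dot v=2uv+\tfrac{2\alpha+1}{3z}-\tfrac{2v}{3z}$; energy $E=v^2/2-u^2v-v/2$, so that $\dot E=-\tfrac{4E}{3z}+\tfrac{4\alpha v-(2\alpha+1)(2u^2+1)}{6z}$, a rational function on the surface. Okamoto space: start from $\mathbb P^2(\mathbb C)$ with charts $(u,v)$, $(u_{01},v_{01})=(1/u,v/u)$, $(u_{02},v_{02})=(u/v,1/v)$; line at infinity $L_0$. Blowing up a point $(a,b)$ in a chart $(s,t)$ creates an exceptional line with charts $s=a+s_1t_1,\ t=b+t_1$ and $s=a+s_2,\ t=b+s_2t_2$. Nine blow-ups: $b_0:(u_{02},v_{02})=(0,0)\to L_1$; $b_1:(u_{12},v_{12})=(0,0)\to L_2$; $b_2:(u_{21},v_{21})=(1/2,0)\to L_3$;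 $b_3:(u_{31},v_{31})=(0,0)\to L_4$; $b_4:(u_{41},v_{41})=(-1/4,0)\to L_5$; $b_5:(u_{51},v_{51})=(\tfrac{1-2\alpha}{12z},0)\to L_6$; $b_6:(u_{01},v_{01})=(0,0)\to L_7$; $b_7:(u_{72},v_{72})=(0,0)\to L_8$; $b_8:(u_{82},v_{82})=(0,-\tfrac{1+2\alpha}{3z})\to L_9$, where blowing up produces charts $(u_{i1},v_{i1})$ (first type) and $(u_{i2},v_{i2})$ (second type) with $i$ the index of the new line. This gives $S_9(z)$; $L_i^{(9-i)}$ is the proper transform of $L_i$. $\mathcal S$ is the bundle of the surfaces $S_9(z)$ over $z\in\mathbb C\setminus\{0\}$. *)

From Stdlib Require Import Reals.

Record Cplx := mkC { Re : R ; Im : R }.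

Definition RC (x : R) : Cplx := mkC x 0%R.
Definition C0 : Cplx := RC 0%R.
Definition Cadd (x y : Cplx) : Cplx := mkC (Re x + Re y)%R (Im x + Im y)%R.
Definition Copp (x : Cplx) : Cplx := mkC (- Re x)%R (- Im x)%R.
Definition Csub (x y : Cplx) : Cplx := Cadd x (Copp y).
Definition Cmul (x y : Cplx) : Cplx :=
  mkC (Re x * Re y - Im x * Im y)%R (Re x * Im y + Im x * Re y)%R.
Definition Cinv (x : Cplx) : Cplx :=
  let d := (Re x * Re x + Im x * Im x)%R in mkC (Re x / d)%R (- Im x / d)%R.
Definition Cdiv (x y : Cplx) : Cplx := Cmul x (Cinv y).
Definition Cnorm (x : Cplx) : R := sqrt (Re x * Re x + Im x * Im x)%R.

Declare Scope C_scope.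
Delimit Scope C_scope with Cplx.
Bind Scope C_scope with Cplx.
Infix "+" := Cadd : C_scope.
Infix "-" := Csub : C_scope.
Infix "*" := Cmul : C_scope.
Infix "/" := Cdiv : C_scope.
Notation "- x" := (Copp x) : C_scope.

Section BP.
Variables (alpha z : Cplx).

Definition udot (u v : Cplx) : Cplx :=
  (v - u * u - RC (1/2) - u / (RC 3 * z))%Cplx.
Definition vdot (u v : Cplx) : Cplx :=
  (RC 2 * u * v + (RC 2 * alpha + RC 1) / (RC 3 * z) - RC 2 * v / (RC 3 * z))%Cplx.

Definition Eng (u v : Cplx) : Cplx := (v * v / RC 2 - u * u * v - v / RC 2)%Cplx.

(* E-dot along solutions: dE/du * u' + dE/dv * v'  (chain rule) *)
Definition Edot (u v : Cplx) : Cplx :=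
  ((- (RC 2 * u * v)) * udot u v + (v - u * u - RC (1/2)) * vdot u v)%Cplx.

Definition rfun (u v : Cplx) : Cplx := (Edot u v / Eng u v + RC 4 / (RC 3 * z))%Cplx.

Definition qfun (u v : Cplx) : Cplx := (RC 3 * z * Edot u v / (RC 4 * Eng u v))%Cplx.
End BP.

(* An affine point (u,v) of Cplx^2 is sent to a chart by composing the   *)
(* inverse blow-down maps; [cok] records that all denominators are     *)
(* nonzero, i.e. that the affine point lies in the domain of the chart.*)
Definition pt := (Cplx * Cplx)%type.
Record cpt := { cp : pt ; cok : Prop }.

(* blowing up (a,b) in chart (s,t):
   first chart   s = a + s1 t1, t = b + t1
   second chart  s = a + s2,    t = b + s2 t2 *)
Definition blow1 (a b : Cplx) (x : cpt) : cpt :=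
  {| cp := ((fst (cp x) - a) / (snd (cp x) - b), snd (cp x) - b)%Cplx ;
     cok := cok x /\ snd (cp x) <> b |}.
Definition blow2 (a b : Cplx) (x : cpt) : cpt :=
  {| cp := (fst (cp x) - a, (snd (cp x) - b) / (fst (cp x) - a))%Cplx ;
     cok := cok x /\ fst (cp x) <> a |}.

Inductive chart :=
  ch01 | ch02 | ch11 | ch12 | ch21 | ch22 | ch31 | ch32 | ch41 | ch42
| ch51 | ch52 | ch61 | ch62 | ch71 | ch72 | ch81 | ch82 | ch91 | ch92.

Section Charts.
Variables (alpha z : Cplx) (u v : Cplx).
Definition x01 : cpt := {| cp := (RC 1 / u, v / u)%Cplx ; cok := u <> C0 |}.
Definition x02 : cpt := {| cp := (u / v, RC 1 / v)%Cplx ; cok := v <> C0 |}.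
Definition x11 := blow1 C0 C0 x02.
Definition x12 := blow2 C0 C0 x02.
Definition x21 := blow1 C0 C0 x12.
Definition x22 := blow2 C0 C0 x12.
Definition x31 := blow1 (RC (1/2)) C0 x21.
Definition x32 := blow2 (RC (1/2)) C0 x21.
Definition x41 := blow1 C0 C0 x31.
Definition x42 := blow2 C0 C0 x31.
Definition x51 := blow1 (RC (-1/4)) C0 x41.
Definition x52 := blow2 (RC (-1/4)) C0 x41.
Definition b5a : Cplx := ((RC 1 - RC 2 * alpha) / (RC 12 * z))%Cplx.
Definition x61 := blow1 b5a C0 x51.
Definition x62 := blow2 b5a C0 x51.
Definition x71 := blow1 C0 C0 x01.
Definition x72 := blow2 C0 C0 x01.
Definition x81 := blow1 C0 C0 x72.
Definition x82 := blow2 C0 C0 x72.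
Definition b8b : Cplx := (- ((RC 1 + RC 2 * alpha) / (RC 3 * z)))%Cplx.
Definition x91 := blow1 C0 b8b x82.
Definition x92 := blow2 C0 b8b x82.

Definition chart_pt (c : chart) : cpt :=
  match c with
  | ch01 => x01 | ch02 => x02 | ch11 => x11 | ch12 => x12
  | ch21 => x21 | ch22 => x22 | ch31 => x31 | ch32 => x32
  | ch41 => x41 | ch42 => x42 | ch51 => x51 | ch52 => x52
  | ch61 => x61 | ch62 => x62 | ch71 => x71 | ch72 => x72
  | ch81 => x81 | ch82 => x82 | ch91 => x91 | ch92 => x92
  end.
End Charts.

Definition near (alpha : Cplx) (c : chart) (p : pt) (delta : R)
  (u v z : Cplx) : Prop :=
  let x := chart_pt alpha z u v c in
  cok x /\
  (Cnorm (fst (cp x) - fst p)%Cplx < delta)%R /\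
  (Cnorm (snd (cp x) - snd p)%Cplx < delta)%R.

(* Points of the proper transforms, as (chart, chart coordinates).     *)
(* Points blown up later are excluded; their replacements (the         *)
(* intersection points with later exceptional lines) are added.        *)
Definition half : Cplx := RC (1/2).

(* L_0^{(9)} : u01 = 0 (v01 <> 0, the point v01 = 0 being blown up by b6);
   the point [0:1:0] (blown up by b0) is replaced by L_0 /\ L_2 = (u22,v22)=(0,0);
   the point [1:0:0] (blown up by b6) is replaced by L_0 /\ L_7 = (u71,v71)=(0,0). *)
Definition on_L0 (c : chart) (p : pt) : Prop :=
  (c = ch01 /\ fst p = C0 /\ snd p <> C0) \/
  (c = ch71 /\ p = (C0, C0)) \/
  (c = ch22 /\ p = (C0, C0)).

(* L_1^{(8)} : v11 = 0 (all of L_1 but the b1 centre), plus L_1 /\ L_2 = (u21,v21)=(0,0) *)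
Definition on_L1 (c : chart) (p : pt) : Prop :=
  (c = ch11 /\ snd p = C0) \/
  (c = ch21 /\ p = (C0, C0)).

(* L_2^{(7)} : v21 = 0, u21 <> 1/2 ; the point u21 = oo, i.e. (u22,v22)=(0,0);
   plus L_2 /\ L_3 = (u32,v32) = (0,0) *)
Definition on_L2 (c : chart) (p : pt) : Prop :=
  (c = ch21 /\ snd p = C0 /\ fst p <> half) \/
  (c = ch22 /\ p = (C0, C0)) \/
  (c = ch32 /\ p = (C0, C0)).

(* L_3^{(6)} : v31 = 0, u31 <> 0 ; the point u31 = oo, i.e. (u32,v32)=(0,0);
   plus L_3 /\ L_4 = (u42,v42) = (0,0) *)
Definition on_L3 (c : chart) (p : pt) : Prop :=
  (c = ch31 /\ snd p = C0 /\ fst p <> C0) \/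
  (c = ch32 /\ p = (C0, C0)) \/
  (c = ch42 /\ p = (C0, C0)).

Definition on_I3 (c : chart) (p : pt) : Prop :=
  on_L0 c p \/ on_L1 c p \/ on_L2 c p \/ on_L3 c p.

(* L_4^{(5)} \ L_5^{(4)} = L_4 minus the b4 centre (u41 = -1/4), parametrised
   homeomorphically by w in Cplx:  w <> 0  |->  u41 = -1/4 + 1/w  (v41 = 0),
   w = 0  |->  u41 = oo, i.e. (u42,v42) = (0,0). *)
Definition L4pt (w : Cplx) (c : chart) (p : pt) : Prop :=
  (w <> C0 /\ c = ch41 /\ p = ((RC (-1/4) + RC 1 / w)%Cplx, C0)) \/
  (w = C0 /\ c = ch42 /\ p = (C0, C0)).

(* L_7^{(2)} \ L_8^{(1)} = L_7 minus u71 = oo, parametrised by m = u71 (v71 = 0). *)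
Definition L7pt (m : Cplx) (c : chart) (p : pt) : Prop :=
  c = ch71 /\ p = (m, C0).

Definition Copen (U : Cplx -> Prop) : Prop :=
  forall x, U x -> exists d : R, (0 < d)%R /\
    forall y, (Cnorm (y - x)%Cplx < d)%R -> U y.
Definition Ccompact (K : Cplx -> Prop) : Prop :=
  forall (I : Type) (F : I -> Cplx -> Prop),
    (forall i, Copen (F i)) ->
    (forall x, K x -> exists i, F i x) ->
    exists l : list I, forall x, K x -> exists i, List.In i l /\ F i x.

(* Writing  N := 4 alpha v - (2 alpha + 1)(2u^2 + 1),
   the chain rule gives  E' = -4E/(3z) + N/(6z), hence
        r = (N/E) / (6z)         and        3zE'/(4E) = (N/E)/8 - 1.
   In every blow-up chart used here, N/E is a quotient P/Q of two polynomials in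
   the chart coordinates (X,Y).  So everything reduces to the continuity of P/Q at
   the relevant points:
   - at every point of I_3 one has Q <> 0 and P = 0, so N/E is small nearby and,
     for z close to z0 <> 0, so is r;
   - on L_4 \ L_5 and L_7 \ L_8 one has Q <> 0 and P/Q is an explicit linear
     function of the global coordinate of the curve, which is bounded on a compact
     set; hence 3zE'/(4E) is uniformly bounded near it. *)

From Coquelicot Require Complex.
From Stdlib Require Import Reals Lra Psatz Field.

Open Scope R_scope.

Definition toC (x : Cplx) : Complex.C := (Re x, Im x).

Lemma Cnorm_toC x : Cnorm x = Complex.Cmod (toC x).
Proof. unfold Cnorm, Complex.Cmod, toC; simpl. f_equal. ring. Qed.

Lemma Cnorm_ge0 x : 0 <= Cnorm x.
Proof. rewrite Cnorm_toC. apply Complex.Cmod_ge_0. Qed.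

Lemma Cnorm_add x y : Cnorm (Cadd x y) <= Cnorm x + Cnorm y.
Proof. rewrite !Cnorm_toC. apply (Complex.Cmod_triangle (toC x) (toC y)). Qed.

Lemma Cnorm_mul x y : Cnorm (Cmul x y) = Cnorm x * Cnorm y.
Proof. rewrite !Cnorm_toC. apply (Complex.Cmod_mult (toC x) (toC y)). Qed.

Lemma Cnorm_opp x : Cnorm (Copp x) = Cnorm x.
Proof. unfold Cnorm, Copp; simpl. f_equal. ring. Qed.

Lemma Cnorm_RC r : Cnorm (RC r) = Rabs r.
Proof. unfold Cnorm, RC; simpl. rewrite Rmult_0_l, Rplus_0_r. apply sqrt_Rsqr_abs. Qed.

Lemma Cnorm_C0 : Cnorm C0 = 0.
Proof. unfold C0. rewrite Cnorm_RC. apply Rabs_R0. Qed.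

Lemma Cnorm_pos x : x <> C0 -> 0 < Cnorm x.
Proof.
  intros Hx. destruct (Cnorm_ge0 x) as [Hlt | Heq]; auto. exfalso; apply Hx.
  rewrite Cnorm_toC in Heq. symmetry in Heq. apply Complex.Cmod_eq_0 in Heq.
  destruct x as [a b]; unfold toC in Heq; simpl in Heq.
  injection Heq as -> ->. reflexivity.
Qed.

Lemma Ceq (x y : Cplx) : Re x = Re y -> Im x = Im y -> x = y.
Proof. destruct x, y; simpl; intros; subst; reflexivity. Qed.

Definition C1 : Cplx := RC 1.

Lemma Cring : ring_theory C0 C1 Cadd Cmul Csub Copp (@eq Cplx).
Proof.
  constructor; intros; apply Ceq; unfold C0, C1, RC, Cadd, Cmul, Csub, Copp; simpl; ring.
Qed.

Lemma Cfield : field_theory C0 C1 Cadd Cmul Csub Copp Cdiv Cinv (@eq Cplx).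
Proof.
  constructor.
  - exact Cring.
  - intro H. unfold C1, C0, RC in H. injection H. lra.
  - reflexivity.
  - intros [a b] Hp.
    assert (Hd : a * a + b * b <> 0).
    { intro Hd. apply Hp. assert (a = 0) by nra. assert (b = 0) by nra. subst; reflexivity. }
    apply Ceq; unfold Cinv, Cmul, C1, RC; simpl; field; exact Hd.
Qed.

Add Field Cfld : Cfield.

Open Scope C_scope.

(** Real numerals, rewritten in terms of [C1] so that [field] can reason with them. *)

Notation C2 := (C1 + C1).

Lemma RC2 : RC 2 = C2. Proof. apply Ceq; unfold C1, RC, Cadd; simpl; ring. Qed.
Lemma RC3 : RC 3 = C2 + C1. Proof. apply Ceq; unfold C1, RC, Cadd; simpl; ring. Qed.
Lemma RC4 : RC 4 = C2 * C2. Proof. apply Ceq; unfold C1, RC, Cadd, Cmul; simpl; ring. Qed.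
Lemma RChalf : RC (1/2) = C1 / C2.
Proof. apply Ceq; unfold C1, RC, Cadd, Cmul, Cdiv, Cinv; simpl; field. Qed.
Lemma RCmquarter : RC (-1/4) = - (C1 / (C2 * C2)).
Proof. apply Ceq; unfold C1, RC, Cadd, Cmul, Cdiv, Cinv, Copp; simpl; field. Qed.

Ltac cnum := rewrite ?RC2, ?RC3, ?RC4, ?RChalf, ?RCmquarter in *; fold C1 in *.

(** Side conditions of [field]: nonzero numerals are decided on real parts. *)
Ltac cside := repeat split; try (let H := fresh in intro H; injection H; intros; lra); auto.

Lemma C1nz : C1 <> C0. Proof. cside. Qed.
Lemma C2nz : C2 <> C0. Proof. cside. Qed.

Lemma Cnorm_C1 : Cnorm C1 = 1%R.
Proof. unfold C1. rewrite Cnorm_RC. apply Rabs_R1. Qed.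

Lemma Cnorm_RC_nonneg (n : R) (c : Cplx) : (0 <= n)%R -> c = RC n -> Cnorm c = n.
Proof. intros Hn ->. rewrite Cnorm_RC. apply Rabs_pos_eq, Hn. Qed.

Lemma Cnorm_C2 : Cnorm C2 = 2%R.
Proof. apply Cnorm_RC_nonneg; [lra | apply Ceq; unfold C1, RC, Cadd; simpl; ring]. Qed.

Lemma Cnorm_C6 : Cnorm (C2 * (C2 + C1)) = 6%R.
Proof. apply Cnorm_RC_nonneg; [lra | apply Ceq; unfold C1, RC, Cadd, Cmul; simpl; ring]. Qed.

Lemma Cnorm_C8 : Cnorm (C2 * C2 * C2) = 8%R.
Proof. apply Cnorm_RC_nonneg; [lra | apply Ceq; unfold C1, RC, Cadd, Cmul; simpl; ring]. Qed.

Lemma Cnorm_inv x : x <> C0 -> Cnorm (Cinv x) = (/ Cnorm x)%R.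
Proof.
  intro Hx. assert (Hpos := Cnorm_pos x Hx).
  apply (Rmult_eq_reg_r (Cnorm x)); [|lra].
  rewrite <- Cnorm_mul. replace (Cinv x * x) with C1 by (field; auto).
  rewrite Cnorm_C1. field. lra.
Qed.

Lemma Cnorm_sub_tri x y : (Cnorm x <= Cnorm y + Cnorm (x - y))%R.
Proof. replace x with (y + (x - y)) at 1 by ring. apply Cnorm_add. Qed.

Lemma Cnorm_sub_sym x y : Cnorm (x - y) = Cnorm (y - x).
Proof. replace (x - y) with (- (y - x)) by ring. apply Cnorm_opp. Qed.

Lemma mul_nz x y : x <> C0 -> y <> C0 -> x * y <> C0.
Proof. intros Hx Hy H. apply Hy. transitivity (Cinv x * (x * y)). field; auto. rewrite H; ring. Qed.

Lemma div_nz x y : x <> C0 -> y <> C0 -> x / y <> C0.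
Proof. intros Hx Hy H. apply Hx. transitivity (x / y * y); [field; auto | rewrite H; ring]. Qed.

Lemma sub_nz x y : x <> y -> x - y <> C0.
Proof. intros H E. apply H. transitivity (x - y + y); [ring | rewrite E; ring]. Qed.

(** The chain-rule formula for E'.  [Eres] is the part of 6zE' not proportional to E. *)

Definition Eres (alpha u v : Cplx) : Cplx :=
  RC 4 * alpha * v - (RC 2 * alpha + RC 1) * (RC 2 * u * u + RC 1).

Lemma Edot_decomposition alpha z u v : z <> C0 ->
  Edot alpha z u v
  = - (C2 * C2) * Eng u v / ((C2 + C1) * z) + Eres alpha u v / (C2 * (C2 + C1) * z).
Proof. intros Hz. unfold Edot, udot, vdot, Eres, Eng. cnum. field. cside. Qed.

Lemma rfun_ratio alpha z u v : z <> C0 -> Eng u v <> C0 ->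
  rfun alpha z u v = Eres alpha u v / Eng u v / (C2 * (C2 + C1) * z).
Proof.
  intros Hz HE. unfold rfun. rewrite Edot_decomposition by auto.
  generalize (Eres alpha u v) (Eng u v) HE. intros n e He. cnum. field. cside.
Qed.

Lemma qfun_ratio alpha z u v : z <> C0 -> Eng u v <> C0 ->
  qfun alpha z u v = Eres alpha u v / Eng u v / (C2 * C2 * C2) - C1.
Proof.
  intros Hz HE. unfold qfun. rewrite Edot_decomposition by auto.
  generalize (Eres alpha u v) (Eng u v) HE. intros n e He. cnum. field. cside.
Qed.

Lemma blow1_inv a b x X Y : cp (blow1 a b x) = (X, Y) -> cok (blow1 a b x) ->
  cp x = (a + X * Y, b + Y) /\ cok x /\ Y <> C0.
Proof.
  destruct x as [[s t] ok]; simpl. intros H [Hok Ht]. injection H as <- <-.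
  assert (t - b <> C0) by (intro E; apply Ht; transitivity (t - b + b); [ring | rewrite E; ring]).
  repeat split; auto; f_equal; field; auto.
Qed.

Lemma blow2_inv a b x X Y : cp (blow2 a b x) = (X, Y) -> cok (blow2 a b x) ->
  cp x = (a + X, b + X * Y) /\ cok x /\ X <> C0.
Proof.
  destruct x as [[s t] ok]; simpl. intros H [Hok Hs]. injection H as <- <-.
  assert (s - a <> C0) by (intro E; apply Hs; transitivity (s - a + a); [ring | rewrite E; ring]).
  repeat split; auto; f_equal; field; auto.
Qed.

Lemma x01_inv u v X Y : cp (x01 u v) = (X, Y) -> cok (x01 u v) ->
  u = C1 / X /\ v = Y / X /\ X <> C0.
Proof.
  simpl. intros H Hu. injection H as <- <-. fold C1.
  assert (C1 / u <> C0) by (intro E; apply C1nz; transitivity (C1 / u * u); [field; auto | rewrite E; ring]).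
  repeat split; auto; field; cside.
Qed.

Lemma x02_inv u v X Y : cp (x02 u v) = (X, Y) -> cok (x02 u v) ->
  u = X / Y /\ v = C1 / Y /\ Y <> C0.
Proof.
  simpl. intros H Hv. injection H as <- <-. fold C1.
  assert (C1 / v <> C0) by (intro E; apply C1nz; transitivity (C1 / v * v); [field; auto | rewrite E; ring]).
  repeat split; auto; field; cside.
Qed.

Lemma mul_nz_inv x y : x * y <> C0 -> x <> C0 /\ y <> C0.
Proof. intros H; split; intro E; apply H; rewrite E; ring. Qed.

Lemma Cadd0l x : C0 + x = x. Proof. ring. Qed.

(** [unblow] expresses u and v through the coordinates of a chart; the resulting
    nonvanishing conditions are split into their factors. *)
Ltac unblow :=
  repeat match goal with
  | H : cp (blow1 ?a ?b ?x) = _, H' : cok (blow1 ?a ?b ?x) |- _ =>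
      let Hc := fresh "Hc" in let Ho := fresh "Ho" in let Hn := fresh "Hn" in
      destruct (blow1_inv a b x _ _ H H') as [Hc [Ho Hn]]; clear H H'
  | H : cp (blow2 ?a ?b ?x) = _, H' : cok (blow2 ?a ?b ?x) |- _ =>
      let Hc := fresh "Hc" in let Ho := fresh "Ho" in let Hn := fresh "Hn" in
      destruct (blow2_inv a b x _ _ H H') as [Hc [Ho Hn]]; clear H H'
  | H : cp (x01 ?u ?v) = _, H' : cok (x01 ?u ?v) |- _ =>
      let Hu := fresh "Hu" in let Hv := fresh "Hv" in let Hn := fresh "Hn" in
      destruct (x01_inv u v _ _ H H') as [Hu [Hv Hn]]; clear H H'
  | H : cp (x02 ?u ?v) = _, H' : cok (x02 ?u ?v) |- _ =>
      let Hu := fresh "Hu" in let Hv := fresh "Hv" in let Hn := fresh "Hn" in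
      destruct (x02_inv u v _ _ H H') as [Hu [Hv Hn]]; clear H H'
  end;
  repeat rewrite Cadd0l in *;
  repeat match goal with
  | H : ?x * ?y <> C0 |- _ => destruct (mul_nz_inv x y H); clear H
  end.

Definition ratio_in_chart (alpha : Cplx) (c : chart) (P Q : Cplx -> Cplx -> Cplx) : Prop :=
  forall z u v X Y, cp (chart_pt alpha z u v c) = (X, Y) -> cok (chart_pt alpha z u v c) ->
    Eng u v <> C0 -> Eres alpha u v / Eng u v = P X Y / Q X Y.

Lemma div_common_factor e n P Q M : e = Q * M -> n = P * M -> e <> C0 -> n / e = P / Q.
Proof.
  intros -> -> He. destruct (mul_nz_inv Q M He) as [HQ HM]. field; auto.
Qed.

(** Charts not passing through the b2 centre: u and v are monomial in (X,Y) up to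
    a division, and N and E share an explicit monomial factor. *)

Definition P01 alpha X Y := C2 * X * (C2 * C2 * alpha * Y * X - (C2 * alpha + C1) * (C2 + X * X)).
Definition Q01 (X Y : Cplx) := Y * (Y * X - C2 - X * X).

Lemma ratio_ch01 alpha : ratio_in_chart alpha ch01 (P01 alpha) Q01.
Proof.
  intros z u v X Y Hc Hok HE; cbn [chart_pt] in *. unblow. cnum.
  apply div_common_factor with (M := C1 / (C2 * X * X * X)); auto;
    rewrite Hu, Hv; unfold Eng, Eres, P01, Q01; cnum; field; cside.
Qed.

Definition P71 alpha X Y := C2 * X * (C2 * C2 * alpha * X * Y * Y - (C2 * alpha + C1) * (C2 + X * X * Y * Y)).
Definition Q71 (X Y : Cplx) := X * Y * Y - C2 - X * X * Y * Y.

Lemma ratio_ch71 alpha : ratio_in_chart alpha ch71 (P71 alpha) Q71.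
Proof.
  intros z u v X Y Hc Hok HE; cbn [chart_pt] in *. unfold x71 in *. unblow. cnum.
  apply div_common_factor with (M := C1 / (C2 * X * X * X * Y * Y)); auto;
    rewrite Hu, Hv; unfold Eng, Eres, P71, Q71; cnum; field; cside.
Qed.

Definition P11 alpha X Y := C2 * Y * (C2 * C2 * alpha - (C2 * alpha + C1) * (C2 * X * X * Y + Y)).
Definition Q11 (X Y : Cplx) := C1 - C2 * X * X * Y - Y.

Lemma ratio_ch11 alpha : ratio_in_chart alpha ch11 (P11 alpha) Q11.
Proof.
  intros z u v X Y Hc Hok HE; cbn [chart_pt] in *. unfold x11 in *. unblow. cnum.
  apply div_common_factor with (M := C1 / (C2 * Y * Y)); auto;
    rewrite Hu, Hv; unfold Eng, Eres, P11, Q11; cnum; field; cside.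
Qed.

Definition P22 alpha X Y := C2 * X * X * Y * (C2 * C2 * alpha * Y - (C2 * alpha + C1) * (C2 + X * X * Y * Y)).
Definition Q22 (X Y : Cplx) := Y - C2 - X * X * Y * Y.

Lemma ratio_ch22 alpha : ratio_in_chart alpha ch22 (P22 alpha) Q22.
Proof.
  intros z u v X Y Hc Hok HE; cbn [chart_pt] in *. unfold x22, x12 in *. unblow. cnum.
  apply div_common_factor with (M := C1 / (C2 * X * X * X * X * Y * Y * Y)); auto;
    rewrite Hu, Hv; unfold Eng, Eres, P22, Q22; cnum; field; cside.
Qed.

(** Over the centre of b2 every chart gives  u = 1/b  and  v = 1/(A b^2)  for a
    nonzero pair (A, b); there  E = (1 - 2A - A b^2) / (2 A^2 b^4)  and
    N = Kf alpha A b / (A b^2).  The chart formulas for N/E follow by cancelling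
    a common factor M of numerator and denominator. *)
Definition Kf alpha A b := C2 * C2 * alpha - (C2 * alpha + C1) * A * (C2 + b * b).

Lemma ratio_over_b2 alpha A b M P Q u v :
  u = C1 / b -> v = C1 / (A * b * b) -> A <> C0 -> b <> C0 -> Eng u v <> C0 ->
  C1 - C2 * A - A * b * b = Q * M -> C2 * A * b * b * Kf alpha A b = P * M ->
  Eres alpha u v / Eng u v = P / Q.
Proof.
  intros -> -> HA Hb HE HQ HP.
  apply div_common_factor with (M := M / (C2 * A * A * b * b * b * b)); auto.
  - transitivity ((C1 - C2 * A - A * b * b) / (C2 * A * A * b * b * b * b)).
    + unfold Eng. cnum. field. cside.
    + rewrite HQ. field. cside.
  - transitivity (C2 * A * b * b * Kf alpha A b / (C2 * A * A * b * b * b * b)).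
    + unfold Eres, Kf. cnum. field. cside.
    + rewrite HP. field. cside.
Qed.

Definition P21 alpha X Y := C2 * X * Y * Y * Kf alpha X Y.
Definition Q21 (X Y : Cplx) := C1 - C2 * X - X * Y * Y.

Lemma ratio_ch21 alpha : ratio_in_chart alpha ch21 (P21 alpha) Q21.
Proof.
  intros z u v X Y Hc Hok HE; cbn [chart_pt] in *. unfold x21, x12 in *. unblow.
  subst u v. apply (ratio_over_b2 alpha X Y C1); auto.
  - field. auto.
  - unfold Q21. ring.
  - unfold P21. ring.
Qed.

Definition A31 (X Y : Cplx) := C1 / C2 + X * Y.
Definition P31 alpha X Y := C2 * A31 X Y * Y * Kf alpha (A31 X Y) Y.
Definition Q31 X Y := - (C2 * X) - A31 X Y * Y.

Lemma ratio_ch31 alpha : ratio_in_chart alpha ch31 (P31 alpha) Q31.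
Proof.
  intros z u v X Y Hc Hok HE; cbn [chart_pt] in *. unfold x31, x21, x12 in *. unblow. cnum.
  unfold P31, Q31, A31. remember (C1 / C2 + X * Y) as A eqn:HA in *.
  subst u v. apply (ratio_over_b2 alpha A Y Y); auto using mul_nz.
  - field. auto.
  - subst A. field. cside.
  - ring.
Qed.

Definition A32 (X Y : Cplx) := C1 / C2 + X.
Definition P32 alpha X Y := C2 * A32 X Y * X * Y * Y * Kf alpha (A32 X Y) (X * Y).
Definition Q32 X Y := - C2 - A32 X Y * X * Y * Y.

Lemma ratio_ch32 alpha : ratio_in_chart alpha ch32 (P32 alpha) Q32.
Proof.
  intros z u v X Y Hc Hok HE; cbn [chart_pt] in *. unfold x32, x21, x12 in *. unblow. cnum.
  unfold P32, Q32, A32. remember (C1 / C2 + X) as A eqn:HA in *.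
  subst u v. apply (ratio_over_b2 alpha A (X * Y) X); auto using mul_nz.
  - field. auto.
  - subst A. field. cside.
  - ring.
Qed.

Definition A41 (X Y : Cplx) := C1 / C2 + X * Y * Y.
Definition P41 alpha X Y := C2 * A41 X Y * Kf alpha (A41 X Y) Y.
Definition Q41 X Y := - (C2 * X) - A41 X Y.

Lemma ratio_ch41 alpha : ratio_in_chart alpha ch41 (P41 alpha) Q41.
Proof.
  intros z u v X Y Hc Hok HE; cbn [chart_pt] in *. unfold x41, x31, x21, x12 in *. unblow. cnum.
  unfold P41, Q41, A41. remember (C1 / C2 + X * Y * Y) as A eqn:HA in *.
  subst u v. apply (ratio_over_b2 alpha A Y (Y * Y)); auto using mul_nz.
  - field. auto.
  - subst A. field. cside.
  - ring.
Qed.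

Definition A42 X Y := C1 / C2 + X * (X * Y).
Definition P42 alpha X Y := C2 * A42 X Y * Y * Kf alpha (A42 X Y) (X * Y).
Definition Q42 X Y := - C2 - A42 X Y * Y.

Lemma ratio_ch42 alpha : ratio_in_chart alpha ch42 (P42 alpha) Q42.
Proof.
  intros z u v X Y Hc Hok HE; cbn [chart_pt] in *. unfold x42, x31, x21, x12 in *. unblow. cnum.
  unfold P42, Q42, A42. remember (C1 / C2 + X * (X * Y)) as A eqn:HA in *.
  subst u v. apply (ratio_over_b2 alpha A (X * Y) (X * X * Y)); auto using mul_nz.
  - field. auto.
  - subst A. field. cside.
  - ring.
Qed.

Definition cont (f : Cplx -> Cplx -> Cplx) (X0 Y0 : Cplx) : Prop :=
  forall eps : R, (0 < eps)%R -> exists d : R, (0 < d)%R /\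
    forall X Y, (Cnorm (X - X0) < d)%R -> (Cnorm (Y - Y0) < d)%R ->
      (Cnorm (f X Y - f X0 Y0) < eps)%R.

Lemma cont_const c X0 Y0 : cont (fun _ _ => c) X0 Y0.
Proof.
  intros eps He. exists 1%R. split; [lra|]. intros X Y _ _.
  replace (c - c) with C0 by ring. rewrite Cnorm_C0. exact He.
Qed.

Lemma cont_X X0 Y0 : cont (fun X _ => X) X0 Y0.
Proof. intros eps He. exists eps. split; auto. Qed.

Lemma cont_Y X0 Y0 : cont (fun _ Y => Y) X0 Y0.
Proof. intros eps He. exists eps. split; auto. Qed.

Lemma cont_opp f X0 Y0 : cont f X0 Y0 -> cont (fun X Y => - f X Y) X0 Y0.
Proof.
  intros Hf eps He. destruct (Hf eps He) as [d [Hd H]]. exists d. split; auto.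
  intros X Y HX HY. replace (- f X Y - - f X0 Y0) with (- (f X Y - f X0 Y0)) by ring.
  rewrite Cnorm_opp. auto.
Qed.

Lemma cont_add f g X0 Y0 :
  cont f X0 Y0 -> cont g X0 Y0 -> cont (fun X Y => f X Y + g X Y) X0 Y0.
Proof.
  intros Hf Hg eps He.
  destruct (Hf (eps / 2)%R) as [d1 [Hd1 H1]]; [lra|].
  destruct (Hg (eps / 2)%R) as [d2 [Hd2 H2]]; [lra|].
  exists (Rmin d1 d2). split; [apply Rmin_pos; auto|]. intros X Y HX HY.
  assert (A1 := Rmin_l d1 d2). assert (A2 := Rmin_r d1 d2).
  assert (B1 := H1 X Y ltac:(lra) ltac:(lra)). assert (B2 := H2 X Y ltac:(lra) ltac:(lra)).
  replace (f X Y + g X Y - (f X0 Y0 + g X0 Y0))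
    with ((f X Y - f X0 Y0) + (g X Y - g X0 Y0)) by ring.
  eapply Rle_lt_trans; [apply Cnorm_add | lra].
Qed.

Lemma cont_sub f g X0 Y0 :
  cont f X0 Y0 -> cont g X0 Y0 -> cont (fun X Y => f X Y - g X Y) X0 Y0.
Proof. intros Hf Hg. apply (cont_add f (fun X Y => - g X Y)); auto using cont_opp. Qed.

(** Product rule:  fg - f0g0 = (f-f0)(g-g0) + (f-f0)g0 + f0(g-g0). *)
Lemma cont_mul f g X0 Y0 :
  cont f X0 Y0 -> cont g X0 Y0 -> cont (fun X Y => f X Y * g X Y) X0 Y0.
Proof.
  intros Hf Hg eps He.
  set (F := Cnorm (f X0 Y0)). set (G := Cnorm (g X0 Y0)).
  assert (HF : (0 <= F)%R) by apply Cnorm_ge0. assert (HG : (0 <= G)%R) by apply Cnorm_ge0.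
  set (e := Rmin 1 (eps / (1 + F + G))).
  assert (He0 : (0 < e)%R) by (apply Rmin_pos; [lra | apply Rdiv_lt_0_compat; lra]).
  assert (He1 : (e <= 1)%R) by apply Rmin_l.
  assert (He2 : (e * (1 + F + G) <= eps)%R).
  { assert (Hr : (e <= eps / (1 + F + G))%R) by apply Rmin_r.
    apply Rmult_le_compat_r with (r := (1 + F + G)%R) in Hr; [|lra].
    unfold Rdiv in Hr. rewrite Rmult_assoc, Rinv_l, Rmult_1_r in Hr; lra. }
  destruct (Hf e He0) as [d1 [Hd1 H1]]. destruct (Hg e He0) as [d2 [Hd2 H2]].
  exists (Rmin d1 d2). split; [apply Rmin_pos; auto|]. intros X Y HX HY.
  assert (A1 := Rmin_l d1 d2). assert (A2 := Rmin_r d1 d2).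
  assert (B1 := H1 X Y ltac:(lra) ltac:(lra)). assert (B2 := H2 X Y ltac:(lra) ltac:(lra)).
  replace (f X Y * g X Y - f X0 Y0 * g X0 Y0) with
    ((f X Y - f X0 Y0) * (g X Y - g X0 Y0)
     + ((f X Y - f X0 Y0) * g X0 Y0 + f X0 Y0 * (g X Y - g X0 Y0))) by ring.
  eapply Rle_lt_trans; [apply Cnorm_add|]. rewrite Cnorm_mul.
  eapply Rle_lt_trans; [apply Rplus_le_compat_l, Cnorm_add|]. rewrite !Cnorm_mul. fold F G.
  set (a := Cnorm (f X Y - f X0 Y0)) in *. set (b := Cnorm (g X Y - g X0 Y0)) in *.
  assert (0 <= a)%R by apply Cnorm_ge0. assert (0 <= b)%R by apply Cnorm_ge0.
  nra.
Qed.

(** Inverse rule: near X0, Y0 one has |f| > |f0|/2, and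
    |1/f - 1/f0| = |f - f0| / (|f| |f0|) < 2 |f - f0| / |f0|^2. *)
Lemma cont_inv f X0 Y0 :
  cont f X0 Y0 -> f X0 Y0 <> C0 -> cont (fun X Y => Cinv (f X Y)) X0 Y0.
Proof.
  intros Hf Hnz eps He.
  set (F := Cnorm (f X0 Y0)). assert (HF : (0 < F)%R) by (apply Cnorm_pos; auto).
  set (e := Rmin (F / 2) (eps * F * F / 2)).
  assert (He0 : (0 < e)%R).
  { apply Rmin_pos; [lra|]. apply Rdiv_lt_0_compat; [|lra]. repeat apply Rmult_lt_0_compat; lra. }
  assert (He1 : (e <= F / 2)%R) by apply Rmin_l.
  assert (He2 : (e <= eps * F * F / 2)%R) by apply Rmin_r.
  destruct (Hf e He0) as [d [Hd H]]. exists d. split; auto. intros X Y HX HY.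
  assert (B := H X Y HX HY). set (a := Cnorm (f X Y - f X0 Y0)) in *.
  assert (Ha : (0 <= a)%R) by apply Cnorm_ge0.
  assert (T := Cnorm_sub_tri (f X0 Y0) (f X Y)). rewrite Cnorm_sub_sym in T. fold a F in T.
  set (g := Cnorm (f X Y)) in *. assert (Hg : (F / 2 < g)%R) by lra.
  assert (Hfx : f X Y <> C0) by (intro E; unfold g in Hg; rewrite E, Cnorm_C0 in Hg; lra).
  replace (Cinv (f X Y) - Cinv (f X0 Y0))
    with ((f X0 Y0 - f X Y) * Cinv (f X Y) * Cinv (f X0 Y0)) by (field; auto).
  rewrite !Cnorm_mul, Cnorm_sub_sym, !Cnorm_inv by auto. fold a F g.
  apply Rmult_lt_reg_r with (r := (g * F)%R); [nra|].
  field_simplify; try lra. nra.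
Qed.

Lemma cont_div f g X0 Y0 :
  cont f X0 Y0 -> cont g X0 Y0 -> g X0 Y0 <> C0 -> cont (fun X Y => f X Y / g X Y) X0 Y0.
Proof. intros Hf Hg Hg0. apply (cont_mul f (fun X Y => Cinv (g X Y))); auto using cont_inv. Qed.

Ltac cont_poly :=
  repeat first [ apply cont_const | apply cont_X | apply cont_Y | apply cont_add
               | apply cont_sub | apply cont_mul | apply cont_opp ].

Lemma ratio_near alpha c P Q X0 Y0 delta u v z :
  ratio_in_chart alpha c P Q -> Eng u v <> C0 -> near alpha c (X0, Y0) delta u v z ->
  exists X Y, (Cnorm (X - X0) < delta)%R /\ (Cnorm (Y - Y0) < delta)%R /\
              Eres alpha u v / Eng u v = P X Y / Q X Y.
Proof.
  intros Hratio HE [Hok [HX HY]].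
  exists (fst (cp (chart_pt alpha z u v c))), (snd (cp (chart_pt alpha z u v c))).
  repeat split; auto. apply (Hratio z); auto. apply surjective_pairing.
Qed.

Definition r_small_at (alpha : Cplx) (eps : R) (c : chart) (p : pt) (z0 : Cplx) : Prop :=
  exists delta : R, (0 < delta)%R /\
    forall u v z : Cplx, z <> C0 -> Eng u v <> C0 -> (Cnorm (z - z0) < delta)%R ->
      near alpha c p delta u v z -> (Cnorm (rfun alpha z u v) < eps)%R.

Lemma r_small_from_ratio alpha c P Q X0 Y0 eps z0 :
  ratio_in_chart alpha c P Q -> cont P X0 Y0 -> cont Q X0 Y0 ->
  Q X0 Y0 <> C0 -> P X0 Y0 = C0 -> (0 < eps)%R -> z0 <> C0 ->
  r_small_at alpha eps c (X0, Y0) z0.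
Proof.
  intros Hratio HP HQ HQ0 HP0 Heps Hz0.
  set (Z := Cnorm z0). assert (HZ : (0 < Z)%R) by (apply Cnorm_pos; auto).
  destruct (cont_div P Q X0 Y0 HP HQ HQ0 (3 * eps * Z)%R) as [d [Hd Hcont]]; [nra|].
  exists (Rmin d (Z / 2)). split; [apply Rmin_pos; lra|].
  intros u v z Hz HE Hzz Hnear.
  assert (A1 := Rmin_l d (Z / 2)). assert (A2 := Rmin_r d (Z / 2)).
  destruct (ratio_near _ _ _ _ _ _ _ _ _ _ Hratio HE Hnear) as [X [Y [HX [HY Hg]]]].
  assert (B := Hcont X Y ltac:(lra) ltac:(lra)).
  rewrite HP0 in B. replace (C0 / Q X0 Y0) with C0 in B by (field; auto).
  replace (P X Y / Q X Y - C0) with (P X Y / Q X Y) in B by ring.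
  assert (T := Cnorm_sub_tri z0 z). fold Z in T. rewrite Cnorm_sub_sym in T.
  assert (Hzpos : (Z / 2 < Cnorm z)%R) by lra.
  rewrite rfun_ratio, Hg by auto. unfold Cdiv at 1.
  rewrite Cnorm_mul, Cnorm_inv, (Cnorm_mul (C2 * (C2 + C1)) z), Cnorm_C6 by (apply mul_nz; cside).
  set (g := Cnorm (P X Y / Q X Y)) in *. assert (0 <= g)%R by apply Cnorm_ge0.
  apply (Rmult_lt_reg_r (6 * Cnorm z)%R); [lra|].
  replace (g * / (6 * Cnorm z) * (6 * Cnorm z))%R with g by (field; lra).
  nra.
Qed.

Definition q_bounded_at (alpha : Cplx) (Cb : R) (c : chart) (p : pt) : Prop :=
  exists delta : R, (0 < delta)%R /\
    forall u v z : Cplx, z <> C0 -> Eng u v <> C0 ->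
      near alpha c p delta u v z -> (Cnorm (qfun alpha z u v) <= Cb)%R.

Lemma q_bounded_at_mono alpha Cb Cb' c p :
  (Cb <= Cb')%R -> q_bounded_at alpha Cb c p -> q_bounded_at alpha Cb' c p.
Proof.
  intros Hle [delta [Hd H]]. exists delta. split; auto.
  intros u v z Hz HE Hn. specialize (H u v z Hz HE Hn). lra.
Qed.

Lemma q_bounded_from_ratio alpha c P Q X0 Y0 Bd :
  ratio_in_chart alpha c P Q -> cont P X0 Y0 -> cont Q X0 Y0 -> Q X0 Y0 <> C0 ->
  (Cnorm (P X0 Y0 / Q X0 Y0) <= Bd)%R -> q_bounded_at alpha (Bd + 2) c (X0, Y0).
Proof.
  intros Hratio HP HQ HQ0 HB.
  destruct (cont_div P Q X0 Y0 HP HQ HQ0 1%R) as [d [Hd Hcont]]; [lra|].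
  exists d. split; auto. intros u v z Hz HE Hnear.
  destruct (ratio_near _ _ _ _ _ _ _ _ _ _ Hratio HE Hnear) as [X [Y [HX [HY Hg]]]].
  assert (B := Hcont X Y HX HY).
  rewrite qfun_ratio, Hg by auto.
  set (g := P X Y / Q X Y) in *. set (g0 := P X0 Y0 / Q X0 Y0) in *.
  assert (T := Cnorm_sub_tri g g0).
  assert (Hg0 : (0 <= Cnorm g)%R) by apply Cnorm_ge0.
  unfold Csub at 1. eapply Rle_trans; [apply Cnorm_add|].
  rewrite Cnorm_opp, Cnorm_C1. unfold Cdiv at 1.
  rewrite Cnorm_mul, Cnorm_inv, Cnorm_C8 by (repeat apply mul_nz; cside).
  lra.
Qed.

Ltac unfold_chart_polys :=
  unfold P01, Q01, P71, Q71, P11, Q11, P21, Q21, P22, Q22, P31, Q31, A31,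
         P32, Q32, A32, P41, Q41, A41, P42, Q42, A42, Kf.

Ltac r_small_in ratio :=
  eapply r_small_from_ratio;
    [ apply ratio | unfold_chart_polys; cont_poly | unfold_chart_polys; cont_poly
    | | unfold_chart_polys; ring | assumption | assumption ].

Ltac value_as K := match goal with |- ?q <> C0 => replace q with K by (unfold_chart_polys; field; cside) end.

Lemma r_small_near_L0 alpha eps c p z0 :
  (0 < eps)%R -> z0 <> C0 -> on_L0 c p -> r_small_at alpha eps c p z0.
Proof.
  intros Heps Hz0 [[-> [HX HY]] | [[-> ->] | [-> ->]]].
  - destruct p as [X0 Y0]; simpl in HX, HY; subst X0.
    r_small_in ratio_ch01. value_as (- C2 * Y0). apply mul_nz; cside.
  - r_small_in ratio_ch71. value_as (- C2). cside.
  - r_small_in ratio_ch22. value_as (- C2). cside.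
Qed.

Lemma r_small_near_L1 alpha eps c p z0 :
  (0 < eps)%R -> z0 <> C0 -> on_L1 c p -> r_small_at alpha eps c p z0.
Proof.
  intros Heps Hz0 [[-> HY] | [-> ->]].
  - destruct p as [X0 Y0]; simpl in HY; subst Y0.
    r_small_in ratio_ch11. value_as C1. cside.
  - r_small_in ratio_ch21. value_as C1. cside.
Qed.

Lemma r_small_near_L2 alpha eps c p z0 :
  (0 < eps)%R -> z0 <> C0 -> on_L2 c p -> r_small_at alpha eps c p z0.
Proof.
  intros Heps Hz0 [[-> [HY HX]] | [[-> ->] | [-> ->]]].
  - destruct p as [X0 Y0]; simpl in HX, HY; subst Y0. unfold half in HX; cnum.
    r_small_in ratio_ch21. value_as (C2 * (C1 / C2 - X0)).
    apply mul_nz; [cside|]. apply sub_nz. auto.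
  - r_small_in ratio_ch22. value_as (- C2). cside.
  - r_small_in ratio_ch32. value_as (- C2). cside.
Qed.

Lemma r_small_near_L3 alpha eps c p z0 :
  (0 < eps)%R -> z0 <> C0 -> on_L3 c p -> r_small_at alpha eps c p z0.
Proof.
  intros Heps Hz0 [[-> [HY HX]] | [[-> ->] | [-> ->]]].
  - destruct p as [X0 Y0]; simpl in HX, HY; subst Y0.
    r_small_in ratio_ch31. value_as (- C2 * X0). apply mul_nz; cside.
  - r_small_in ratio_ch32. value_as (- C2). cside.
  - r_small_in ratio_ch42. value_as (- C2). cside.
Qed.

(** Part (2).  On L_4 \ L_5 with coordinate w one has N/E = (1 - 2 alpha) w / 2
    (and N/E = 0 at w = 0); on L_7 \ L_8 with coordinate m, N/E = 2 (2 alpha + 1) m. *)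

Lemma q_bounded_near_L4 alpha B w c p :
  (Cnorm w <= B)%R -> L4pt w c p ->
  q_bounded_at alpha (Cnorm (C1 - C2 * alpha) * B + 2) c p.
Proof.
  intros Hw [[Hw0 [-> ->]] | [-> [-> ->]]]; cnum;
    assert (HB : (0 <= Cnorm (C1 - C2 * alpha) * B)%R)
      by (apply Rmult_le_pos; [apply Cnorm_ge0 | eapply Rle_trans; [apply Cnorm_ge0 | exact Hw]]).
  - apply (q_bounded_from_ratio alpha ch41 (P41 alpha) Q41); auto using ratio_ch41.
    + unfold_chart_polys; cont_poly.
    + unfold_chart_polys; cont_poly.
    + value_as (- C2 / w). apply div_nz; cside.
    + replace (P41 alpha (- (C1 / (C2 * C2)) + C1 / w) C0 / Q41 (- (C1 / (C2 * C2)) + C1 / w) C0)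
        with ((C1 - C2 * alpha) * w / C2) by (unfold_chart_polys; field; cside).
      unfold Cdiv. rewrite !Cnorm_mul, Cnorm_inv, Cnorm_C2 by exact C2nz.
      assert (Hn := Cnorm_ge0 (C1 - C2 * alpha)). nra.
  - apply (q_bounded_from_ratio alpha ch42 (P42 alpha) Q42); auto using ratio_ch42.
    + unfold_chart_polys; cont_poly.
    + unfold_chart_polys; cont_poly.
    + value_as (- C2). cside.
    + replace (P42 alpha C0 C0 / Q42 C0 C0) with C0 by (unfold_chart_polys; field; cside).
      rewrite Cnorm_C0. exact HB.
Qed.

Lemma q_bounded_near_L7 alpha B m c p :
  (Cnorm m <= B)%R -> L7pt m c p ->
  q_bounded_at alpha (Cnorm (C2 * (C2 * alpha + C1)) * B + 2) c p.
Proof.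
  intros Hm [-> ->].
  apply (q_bounded_from_ratio alpha ch71 (P71 alpha) Q71); auto using ratio_ch71.
  - unfold_chart_polys; cont_poly.
  - unfold_chart_polys; cont_poly.
  - value_as (- C2). cside.
  - replace (P71 alpha m C0 / Q71 m C0) with (C2 * (C2 * alpha + C1) * m)
      by (unfold_chart_polys; field; cside).
    rewrite Cnorm_mul. apply Rmult_le_compat_l; [apply Cnorm_ge0 | exact Hm].
Qed.

(** A compact subset of Cplx is bounded: it is covered by finitely many open discs
    centred at 0. *)
Lemma compact_bounded K : Ccompact K -> exists B, (0 <= B)%R /\ forall w, K w -> (Cnorm w <= B)%R.
Proof.
  intro HK.
  destruct (HK nat (fun n x => (Cnorm x < INR n)%R)) as [l Hl].
  - intros n x Hx. exists (INR n - Cnorm x)%R. split; [lra|]. intros y Hy.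
    assert (T := Cnorm_sub_tri y x). lra.
  - intros x _. destruct (INR_archimed 1 (Cnorm x)) as [n Hn]; [lra|]. exists n. lra.
  - exists (List.fold_right (fun n acc => Rmax (INR n) acc) 0%R l). split.
    + clear Hl. induction l as [|n l IH]; simpl; [lra|]. eapply Rle_trans; [apply IH | apply Rmax_r].
    + intros w Hw. destruct (Hl w Hw) as [n [Hin Hn]]. clear Hl Hw.
      induction l as [|a l IH]; simpl in *; [contradiction|].
      destruct Hin as [-> | Hin].
      * eapply Rle_trans; [|apply Rmax_l]; lra.
      * eapply Rle_trans; [apply IH; auto | apply Rmax_r].
Qed.

Lemma q_bounded_near_compact alpha (K4 K7 : Cplx -> Prop) :
  Ccompact K4 -> Ccompact K7 ->
  exists Cb : R, (0 < Cb)%R /\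
    forall c p, ((exists w, K4 w /\ L4pt w c p) \/ (exists m, K7 m /\ L7pt m c p)) ->
      q_bounded_at alpha Cb c p.
Proof.
  intros HK4 HK7.
  destruct (compact_bounded K4 HK4) as [B4 [HB4 Hbd4]].
  destruct (compact_bounded K7 HK7) as [B7 [HB7 Hbd7]].
  set (a4 := Cnorm (C1 - C2 * alpha)). set (a7 := Cnorm (C2 * (C2 * alpha + C1))).
  assert (Ha4 : (0 <= a4)%R) by apply Cnorm_ge0. assert (Ha7 : (0 <= a7)%R) by apply Cnorm_ge0.
  exists (a4 * B4 + a7 * B7 + 2)%R. split; [nra|].
  intros c p [[w [Kw Hw]] | [m [Km Hm]]].
  - apply q_bounded_at_mono with (a4 * B4 + 2)%R; [nra|].
    exact (q_bounded_near_L4 alpha B4 w c p (Hbd4 w Kw) Hw).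
  - apply q_bounded_at_mono with (a7 * B7 + 2)%R; [nra|].
    exact (q_bounded_near_L7 alpha B7 m c p (Hbd7 m Km) Hm).
Qed.

Theorem lemma1 (alpha : Cplx) :
  (* (1) for every eps > 0 there is a neighbourhood U of I_3 in the bundle S
     (a union of chart balls around the points of I_3 x (Cplx \ {0}))
     on which |r| < eps, for all z <> 0 *)
  (forall eps : R, (0 < eps)%R ->
     forall (c : chart) (p : pt) (z0 : Cplx), on_I3 c p -> z0 <> C0 ->
     exists delta : R, (0 < delta)%R /\
       forall u v z : Cplx, z <> C0 -> Eng u v <> C0 ->
         (Cnorm (z - z0)%Cplx < delta)%R ->
         near alpha c p delta u v z ->
         (Cnorm (rfun alpha z u v) < eps)%R)
  /\
  (* (2) for every compact K in (L_4^(5) \ L_5^(4)) u (L_7^(2) \ L_8^(1))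
     (written as K4 u K7 via the global coordinates of the two disjoint curves)
     there are a neighbourhood V of K in S_9 and Cplx > 0 with |3 z E'/(4E)| <= Cplx
     on V for all z <> 0 *)
  (forall K4 K7 : Cplx -> Prop, Ccompact K4 -> Ccompact K7 ->
     exists Cb : R, (0 < Cb)%R /\
       forall (c : chart) (p : pt),
         ((exists w, K4 w /\ L4pt w c p) \/ (exists m, K7 m /\ L7pt m c p)) ->
         exists delta : R, (0 < delta)%R /\
           forall u v z : Cplx, z <> C0 -> Eng u v <> C0 ->
             near alpha c p delta u v z ->
             (Cnorm (qfun alpha z u v) <= Cb)%R).
Proof.
  split.
  - intros eps Heps c p z0 HI Hz0.
    destruct HI as [HL | [HL | [HL | HL]]].
    + exact (r_small_near_L0 alpha eps c p z0 Heps Hz0 HL).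
    + exact (r_small_near_L1 alpha eps c p z0 Heps Hz0 HL).
    + exact (r_small_near_L2 alpha eps c p z0 Heps Hz0 HL).
    + exact (r_small_near_L3 alpha eps c p z0 Heps Hz0 HL).
  - intros K4 K7 HK4 HK7. exact (q_bounded_near_compact alpha K4 K7 HK4 HK7).
Qed.
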